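(* For any commutative ring $\mathbf k$ and any $0\le d\le m-1$, the complex $\operatorname{sk}_d\Delta_{[m]}$ is HMF-presented over $\mathbf k$.
   Context: $\Delta_{[m]}$ is the full simplex on $[m]$, $\operatorname{sk}_d$ its $d$-skeleton. For a complex $\mathcal K$ and $I\subseteq[m]$: $\mathcal K_I$ is the full subcomplex, $\partial\Delta_I=\{J\subsetneq I\}$, $\partial^2\Delta_I=\{J\subseteq I:|I\setminus J|\ge2\}$, $\mathrm{MF}(\mathcal K)=\{I:\mathcal K_I=\partial\Delta_I\}$, $\mathrm{AMF}(\mathcal K)=\{L:\partial^2\Delta_L\subseteq\mathcal K_L\subsetneq\partial\Delta_L\}$. With oriented augmented chains $e_I$ and $d(e_I)=\sum_{i\in I}(-1)^{|I_{<i}|}e_{I\setminus i}$, $I_{<i}=\{j\in I:j<i\}$, each $I\in\mathrm{MF}(\mathcal K_J)$ defines $[\partial\Delta_I]\in\widetilde H_{|I|-2}(\mathcal K_J;\mathbf k)$ (class of $d(e_I)$), and each $L\in\mathrm{AMF}(\mathcal K_J)$ defines the formal relation $\rho_L=\sum_{i\in L,L\setminus i\notin\mathcal K}(-1)^{|L_{<i}|}x_{L\setminus i}$. $\mathcal K$ is HMF-presented over $\mathbf k$ if for every $J\subseteq[m]$ the sequence $\bigoplus_{L\in\mathrm{AMF}(\mathcal K_J)}\mathbf k\rho_L\to\bigoplus_{I\in\mathrm{MF}(\mathcal K_J)}\mathbf kx_I\to\widetilde H_*(\mathcal K_J;\mathbf k)\to0$, $x_I\mapsto[\partial\Delta_I]$,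 is exact. *)

From HB Require Import structures.
From mathcomp Require Import all_boot all_order all_algebra.
Set Implicit Arguments. Unset Strict Implicit. Unset Printing Implicit Defensive.
Import GRing.Theory.
Local Open Scope ring_scope.

(* Simplicial complexes on the vertex set [m] = 'I_m, given as sets of faces
   (the empty face is included: augmented setting). *)
Section HMF.
Variables (k : comPzRingType) (m : nat).
Notation vset := {set 'I_m}.
Notation cplx := {set {set 'I_m}}.

Definition skel (d : nat) : cplx := [set I : vset | (#|I| <= d.+1)%N].

Definition full_sub (K : cplx) (J : vset) : cplx := [set I in K | I \subset J].

Definition bdD (I : vset) : cplx := [set S : vset | S \proper I].
Definition bd2D (L : vset) : cplx :=
  [set S : vset | (S \subset L) && (2 <= #|L :\: S|)%N].

Definition MF_on (V : vset) (L : cplx) : cplx :=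
  [set I : vset | (I \subset V) && (full_sub L I == bdD I)].
Definition AMF_on (V : vset) (L : cplx) : cplx :=
  [set A : vset | [&& A \subset V, bd2D A \subset full_sub L A
                   & full_sub L A \proper bdD A]].

(* oriented augmented chains: a chain is a function on subsets of [m];
   it is a chain of L when supported on faces of L *)
Definition chain_in (L : cplx) (c : {ffun vset -> k}) :=
  forall S, S \notin L -> c S = 0.

(* sign (-1)^{|I_{<i}|} for I = S u {i}, i notin S *)
Definition sgn (S : vset) (i : 'I_m) : k :=
  (-1) ^+ #|[set j in S | (val j < val i)%N]|.

Definition e_ (I : vset) : {ffun vset -> k} := [ffun S => (S == I)%:R].

(* boundary map d(e_I) = sum_{i in I} (-1)^{|I_{<i}|} e_{I \ i}, extended linearly *)
Definition bdry (c : {ffun vset -> k}) : {ffun vset -> k} :=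
  [ffun S : vset => \sum_(i : 'I_m | i \notin S) sgn S i * c (i |: S)].

(* image of sum_I x_I x_I under x_I |-> d(e_I) (a cycle representative) *)
Definition mf_map (V : vset) (L : cplx) (x : {ffun vset -> k}) : {ffun vset -> k} :=
  [ffun S : vset => \sum_(I in MF_on V L) x I * bdry (e_ I) S].

Definition rho (L : cplx) (A : vset) : {ffun vset -> k} :=
  [ffun I : vset => \sum_(i in A | (A :\ i) \notin L) sgn (A :\ i) i * e_ (A :\ i) I].

(* HMF-presentation: for every nonempty J, the sequence
   (+)_{AMF(K_J)} k rho -> (+)_{MF(K_J)} k x_I -> H~_*(K_J;k) -> 0 is exact.
   H~_* is the homology of the total augmented chain complex of K_J. *)
Definition HMF_presented (K : cplx) : Prop :=
  forall J : vset, J != set0 ->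
  let L := full_sub K J in
  (* surjectivity onto reduced homology *)
  (forall z, chain_in L z -> bdry z = 0 ->
     exists x : {ffun vset -> k}, exists w, chain_in L w /\
       z = mf_map J L x + bdry w)
  /\
  (* exactness at (+)_{MF} k x_I : kernel = span of the rho_A *)
  (forall x : {ffun vset -> k}, (forall I, I \notin MF_on J L -> x I = 0) ->
     ((exists w, chain_in L w /\ mf_map J L x = bdry w) <->
      (exists y : {ffun vset -> k}, x = [ffun I : vset => \sum_(A in AMF_on J L) y A * rho L A I]))).

End HMF.

(* The cone with apex v, c |-> v * c, is a contracting homotopy of the
   augmented chain complex of the full simplex: d (v * c) + v * (d c) = c.
   For a nonempty J and v in J, a cycle z of sk_d(J) is therefore the
   boundary of v * z, which lives on faces of J of size at most d + 2; the
   faces of size d + 2 are exactly the minimal non-faces, so z is an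
   MF-combination plus a boundary in sk_d(J).  Conversely an MF-combination x
   whose boundary bounds in sk_d(J) is a cycle for dimension reasons, hence
   x = d (v * x), and v * x lives on (d + 3)-subsets of J, which are
   almost minimal non-faces whose relations rho are their boundaries. *)

From mathcomp Require Import all_boot all_order all_algebra.
From mathcomp Require Import zify ring.
Set Implicit Arguments. Unset Strict Implicit. Unset Printing Implicit Defensive.
Import GRing.Theory.
Local Open Scope ring_scope.

Lemma sum_antisym (R : zmodType) n (F : 'I_n -> 'I_n -> R) :
  (forall i j, F j i = - F i j) -> (forall i, F i i = 0) ->
  \sum_i \sum_j F i j = 0.
Proof.
move=> FN F0; rewrite pair_bigA /=.
rewrite (bigID (fun p : 'I_n * 'I_n => (p.1 < p.2)%N)) /=.
have -> : \sum_(p : 'I_n * 'I_n | ~~ (p.1 < p.2)%N) F p.1 p.2 =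
          \sum_(p : 'I_n * 'I_n | (p.2 < p.1)%N) F p.1 p.2.
  rewrite big_mkcond [RHS]big_mkcond; apply: eq_bigr => p _.
  by case: (ltngtP p.1 p.2) => //= /val_inj ->; rewrite F0.
rewrite (reindex_inj (h := fun p : 'I_n * 'I_n => (p.2, p.1))) /=; last first.
  by case=> a b [c e] /= [-> ->].
by rewrite -big_split big1 // => p _ /=; rewrite FN addNr.
Qed.

Section Chains.
Variables (k : comPzRingType) (m : nat).
Notation vset := {set 'I_m}.
Notation chain := {ffun vset -> k}.

Lemma sgn_sqr (S : vset) i : sgn k S i * sgn k S i = 1.
Proof. by rewrite /sgn -exprMn mulrNN mulr1 expr1n. Qed.

Lemma sign_ltC (i j : 'I_m) : i != j ->
  (-1) ^+ (i < j)%N = - (-1) ^+ (j < i)%N :> k.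
Proof.
by case: (ltngtP i j) => [_|_|/val_inj ->]; rewrite ?eqxx ?expr0 ?expr1 ?opprK.
Qed.

Lemma sgnU1 (S : vset) i j : i \notin S -> j != i ->
  sgn k (i |: S) j = sgn k S j * (-1) ^+ (i < j)%N.
Proof.
move=> iS ji; rewrite /sgn -exprD; congr (_ ^+ _).
case: ltnP => ij.
  have -> : [set x in i |: S | (x < j)%N] = i |: [set x in S | (x < j)%N].
    by apply/setP=> x; rewrite !inE; case: eqVneq => // ->.
  by rewrite cardsU1 inE (negbTE iS) addnC.
rewrite addn0; apply: eq_card => x; rewrite !inE.
by case: eqVneq => // ->; rewrite (negbTE iS) ltnNge ij.
Qed.

Lemma sgn_swap (S : vset) i j : i \notin S -> j \notin S -> i != j ->
  sgn k S i * sgn k (i |: S) j = - (sgn k S j * sgn k (j |: S) i).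
Proof.
move=> iS jS ij; have ji : j != i by rewrite eq_sym.
by rewrite !sgnU1 // (sign_ltC ij); case: (j < i)%N; rewrite ?expr0 ?expr1; ring.
Qed.

Lemma sgnU1_swap (S : vset) i j : i \notin S -> j \notin S -> i != j ->
  sgn k (j |: S) i * sgn k (i |: S) j = - (sgn k S j * sgn k S i).
Proof.
move=> iS jS ij; have ji : j != i by rewrite eq_sym.
by rewrite !sgnU1 // (sign_ltC ij); case: (j < i)%N; rewrite ?expr0 ?expr1; ring.
Qed.

Lemma bdryD (a b : chain) : bdry (a + b) = bdry a + bdry b.
Proof.
apply/ffunP=> S; rewrite !ffunE -big_split; apply: eq_bigr => i _.
by rewrite ffunE mulrDr.
Qed.

Lemma bdry0 : bdry (0 : chain) = 0.
Proof.
by apply/ffunP=> S; rewrite !ffunE big1 // => i _; rewrite ffunE mulr0.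
Qed.

Lemma bdry_bdry (c : chain) : bdry (bdry c) = 0.
Proof.
apply/ffunP=> S; rewrite !ffunE.
pose F i j := if [&& i \notin S, j \notin S & i != j] then
  sgn k S i * sgn k (i |: S) j * c (j |: (i |: S)) else 0.
transitivity (\sum_i \sum_j F i j); last first.
  apply: sum_antisym => [i j|i]; last by rewrite /F eqxx !andbF.
  rewrite /F [j == i]eq_sym andbCA.
  case: ifP => [/and3P[iS jS ij]|_]; last by rewrite oppr0.
  by rewrite setUCA (sgn_swap iS jS ij) mulNr opprK.
rewrite big_mkcond; apply: eq_bigr => i _.
case: (boolP (i \notin S)) => iS /=; last first.
  by rewrite big1 // => j _; rewrite /F (negbTE iS).
rewrite ffunE mulr_sumr big_mkcond; apply: eq_bigr => j _.
rewrite /F iS in_setU1 negb_or [j == i]eq_sym /=.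
by case: (i != j); case: (j \notin S); rewrite //= mulrA.
Qed.

(* The join with the vertex v: e_S |-> (-1)^{|S_{<v}|} e_{v u S} for v notin S. *)
Definition cone (v : 'I_m) (c : chain) : chain :=
  [ffun T : vset => if v \in T then sgn k (T :\ v) v * c (T :\ v) else 0].

Lemma cone0 v : cone v 0 = 0.
Proof. by apply/ffunP=> T; rewrite !ffunE mulr0 if_same. Qed.

Lemma cone_eq0 v (c : chain) (T : vset) :
  (v \in T -> c (T :\ v) = 0) -> cone v c T = 0.
Proof. by move=> cT; rewrite ffunE; case: ifP => // /cT ->; rewrite mulr0. Qed.

Lemma setU1UD1 (R : vset) i v :
  i != v -> v \notin R -> (i |: (v |: R)) :\ v = i |: R.
Proof.
move=> iv vR; apply/setP=> x; rewrite !inE.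
by case: (eqVneq x v) => [->|//]; rewrite eq_sym (negbTE iv) (negbTE vR).
Qed.

Lemma bdry_cone v (c : chain) : bdry (cone v c) + cone v (bdry c) = c.
Proof.
apply/ffunP=> S; rewrite ffunE.
case: (boolP (v \in S)) => vS; last first.
  rewrite [cone v _ S]ffunE (negbTE vS) addr0 ffunE (bigD1 v) //=.
  rewrite ffunE setU11 setU1K // mulrA sgn_sqr mul1r big1 ?addr0 //.
  move=> i /andP[iS iv].
  by rewrite ffunE !inE (negbTE vS) orbF eq_sym (negbTE iv) mulr0.
have vSv : v \notin S :\ v by rewrite setD11.
rewrite -(setD1K vS); move: (S :\ v) vSv => R vR.
rewrite [cone v _ _]ffunE setU11 setU1K // !ffunE.
rewrite [X in sgn k R v * X](bigD1 v) //= mulrDr mulrA sgn_sqr mul1r addrCA.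
rewrite -[RHS]addr0; congr (_ + _).
rewrite mulr_sumr (eq_bigl (fun i => (i \notin R) && (i != v))); last first.
  by move=> i; rewrite in_setU1 negb_or andbC.
rewrite -big_split big1 // => i /andP[iR iv] /=.
by rewrite ffunE !inE eqxx orbT setU1UD1 // !mulrA sgnU1_swap // mulNr addNr.
Qed.

Lemma bdry_cone_cycle v (c : chain) : bdry c = 0 -> bdry (cone v c) = c.
Proof. by move=> dc; rewrite -[RHS](bdry_cone v) dc cone0 addr0. Qed.

Definition restr (P : {set vset}) (c : chain) : chain :=
  [ffun S => if S \in P then c S else 0].

Lemma restr_id (P : {set vset}) (c : chain) :
  (forall S, S \notin P -> c S = 0) -> restr P c = c.
Proof. by move=> cP; apply/ffunP=> S; rewrite ffunE; case: ifPn => // /cP ->. Qed.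

Lemma restrU (P Q : {set vset}) (c : chain) :
  [disjoint P & Q] -> (forall S, S \notin P :|: Q -> c S = 0) ->
  c = restr P c + restr Q c.
Proof.
move=> PQ cPQ; apply/ffunP=> S; rewrite !ffunE.
case: (boolP (S \in P)) => SP; first by rewrite (disjointFr PQ SP) addr0.
by rewrite add0r; case: ifP => // SQ; rewrite cPQ // inE (negbTE SP) SQ.
Qed.

Lemma sum_bdry_e (P : {set vset}) (x : chain) S :
  \sum_(I in P) x I * bdry (e_ k I) S = bdry (restr P x) S.
Proof.
rewrite ffunE; under eq_bigr do rewrite ffunE mulr_sumr.
rewrite exchange_big /=; apply: eq_bigr => i iS; rewrite ffunE.
case: (boolP (i |: S \in P)) => iSP.
  rewrite (bigD1 (i |: S)) //= big1 ?addr0; last first.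
    by move=> I /andP[_ ne]; rewrite ffunE eq_sym (negbTE ne) !mulr0.
  by rewrite ffunE eqxx mulr1 mulrC.
rewrite mulr0 big1 // => I IP; rewrite ffunE.
have SI : i |: S != I by apply: contraNneq iSP => ->.
by rewrite (negbTE SI) !mulr0.
Qed.

Lemma mf_mapE (V : vset) (L : {set vset}) (x : chain) :
  mf_map V L x = bdry (restr (MF_on V L) x).
Proof. by apply/ffunP=> S; rewrite ffunE sum_bdry_e. Qed.

Lemma rho_bdry_e (L : {set vset}) (A : vset) :
  (forall i, i \in A -> A :\ i \notin L) -> rho k L A = bdry (e_ k A).
Proof.
move=> AL; apply/ffunP=> I; rewrite !ffunE big_mkcond [RHS]big_mkcond.
apply: eq_bigr => i _ /=; rewrite !ffunE.
case: (eqVneq I (A :\ i)) => [->|IA].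
  rewrite !inE eqxx /=; case: (boolP (i \in A)) => iA /=.
    by rewrite AL // setD1K // eqxx.
  have /negbTE-> : i |: A :\ i != A by apply: contraNneq iA => <-; rewrite setU11.
  by rewrite mulr0.
rewrite mulr0 if_same; case: ifP => // iI.
case: eqVneq => [iIA|]; last by rewrite mulr0.
by move: IA; rewrite -iIA setU1K ?eqxx // iI.
Qed.

Lemma sum_rhoE (L P : {set vset}) (y : chain) :
  {in P, forall (A : vset) i, i \in A -> A :\ i \notin L} ->
  [ffun I => \sum_(A in P) y A * rho k L A I] = bdry (restr P y).
Proof.
move=> PL; apply/ffunP=> I; rewrite ffunE -sum_bdry_e.
by apply: eq_bigr => A /PL AL; rewrite rho_bdry_e.
Qed.

End Chains.

Section Skeleton.
Variables (k : comPzRingType) (m d : nat) (J : {set 'I_m}) (v : 'I_m).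
Hypothesis vJ : v \in J.
Notation vset := {set 'I_m}.
Notation chain := {ffun vset -> k}.
Let L := full_sub (skel m d) J.

Lemma mem_full_skel (S : vset) : (S \in L) = (#|S| <= d.+1)%N && (S \subset J).
Proof. by rewrite !inE. Qed.

Lemma mem_MF_skel (I : vset) :
  (I \in MF_on J L) = (I \subset J) && (#|I| == d.+2).
Proof.
rewrite inE; case: (boolP (I \subset J)) => IJ //=.
apply/eqP/eqP => [LI|cI].
  have : I \notin full_sub L I by rewrite LI inE properxx.
  rewrite inE mem_full_skel IJ subxx !andbT -ltnNge => cI.
  have /set0Pn [i iI] : I != set0 by rewrite -card_gt0; lia.
  have : I :\ i \in full_sub L I by rewrite LI inE properD1.
  rewrite inE mem_full_skel => /andP[/andP[cIi _] _].
  by rewrite (cardsD1 i I) iI add1n in cI *; lia.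
apply/setP=> S; rewrite !inE properEcard.
case: (boolP (S \subset I)) => SI; rewrite ?andbF ?andbT //.
by rewrite (subset_trans SI IJ) andbT cI; lia.
Qed.

Lemma AMF_skel_card (A : vset) : A \in AMF_on J L -> (d.+3 <= #|A|)%N.
Proof.
rewrite inE => /and3P[AJ _ /properP[_ [S]]].
rewrite !inE properEcard => /andP[SA cS].
by rewrite SA (subset_trans SA AJ) !andbT -ltnNge; lia.
Qed.

Lemma mem_AMF_skel (A : vset) : A \subset J -> #|A| = d.+3 -> A \in AMF_on J L.
Proof.
move=> AJ cA; rewrite inE AJ /=; apply/andP; split.
  apply/subsetP=> S; rewrite !inE => /andP[SA c2].
  rewrite SA (subset_trans SA AJ) !andbT.
  by move: c2; rewrite cardsD (setIidPr SA) cA; lia.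
apply/properP; split.
  apply/subsetP=> S; rewrite !inE => /andP[/andP[cS _] SA].
  by rewrite properEcard SA cA; lia.
have /set0Pn [i iA] : A != set0 by rewrite -card_gt0 cA.
exists (A :\ i); first by rewrite inE properD1.
rewrite inE mem_full_skel -!andbA negb_and -ltnNge.
by move: cA; rewrite (cardsD1 i A) iA add1n => -[->]; rewrite ltnSn.
Qed.

Lemma AMF_skel_facets :
  {in AMF_on J L, forall (A : vset) i, i \in A -> A :\ i \notin L}.
Proof.
move=> A /AMF_skel_card cA i iA; rewrite mem_full_skel negb_and -ltnNge.
by rewrite (cardsD1 i A) iA add1n ltnS in cA; rewrite cA.
Qed.

Lemma subsetD1_apex (T : vset) : v \in T -> (T :\ v \subset J) = (T \subset J).
Proof.
move=> vT; apply/idP/idP => [TvJ|/(subset_trans (subD1set T v))//].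
by rewrite -(setD1K vT) subUset sub1set vJ.
Qed.

Lemma skel_cycle_mf (z : chain) : chain_in L z -> bdry z = 0 ->
  exists x w, chain_in L w /\ z = mf_map J L x + bdry w.
Proof.
move=> zL dz; set u := cone v z.
have u_supp : forall T, T \notin MF_on J L :|: L -> u T = 0.
  move=> T; rewrite in_setU mem_MF_skel mem_full_skel negb_or => /andP[nMF nL].
  apply: cone_eq0 => vT; apply: zL; rewrite mem_full_skel subsetD1_apex //.
  case: (boolP (T \subset J)) => TJ; last by rewrite andbF.
  rewrite TJ andbT -ltnNge (cardsD1 v T) vT add1n in nMF nL *.
  by move: nMF nL; move: #|T :\ v| => n; lia.
have MF_L : [disjoint MF_on J L & L].
  rewrite disjoints_subset; apply/subsetP => S.
  by rewrite in_setC mem_MF_skel mem_full_skel => /andP[_ /eqP->]; rewrite ltnn.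
exists u, (restr L u); split; first by move=> S SL; rewrite ffunE (negbTE SL).
by rewrite mf_mapE -bdryD -restrU // bdry_cone_cycle.
Qed.

Lemma skel_mf_bdry_eq0 (x w : chain) :
  (forall I, I \notin MF_on J L -> x I = 0) -> chain_in L w ->
  bdry x = bdry w -> bdry x = 0.
Proof.
move=> xMF wL dxw; apply/ffunP=> S; rewrite [RHS]ffunE.
have cSU i : i \notin S -> #|i |: S| = #|S|.+1 by move=> iS; rewrite cardsU1 iS.
case: (leqP #|S| d) => cS.
  rewrite ffunE big1 // => i /cSU cSi; rewrite xMF ?mulr0 // mem_MF_skel.
  by rewrite negb_and cSi; lia.
rewrite dxw ffunE big1 // => i /cSU cSi; rewrite wL ?mulr0 // mem_full_skel.
by rewrite negb_and cSi; lia.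
Qed.

Lemma skel_mf_relations (x : chain) :
  (forall I, I \notin MF_on J L -> x I = 0) ->
  (exists w, chain_in L w /\ mf_map J L x = bdry w) <->
  (exists y : chain, x = [ffun I => \sum_(A in AMF_on J L) y A * rho k L A I]).
Proof.
move=> xMF; rewrite mf_mapE restr_id //.
split=> [[w [wL dxw]]|[y ->]].
  exists (cone v x); rewrite sum_rhoE; last exact: AMF_skel_facets.
  rewrite restr_id; last first.
    move=> T TA; apply: cone_eq0 => vT; apply: xMF; apply: contra TA.
    rewrite mem_MF_skel subsetD1_apex // => /andP[TJ /eqP cTv].
    by apply: mem_AMF_skel => //; rewrite (cardsD1 v T) vT cTv.
  by rewrite bdry_cone_cycle // (skel_mf_bdry_eq0 xMF wL dxw).
exists 0; split; first by move=> S _; rewrite ffunE.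
rewrite sum_rhoE; last exact: AMF_skel_facets.
by rewrite bdry_bdry bdry0.
Qed.

End Skeleton.

Theorem mainTheorem12 (k : comPzRingType) (m d : nat) :
  (d < m)%N -> HMF_presented k (skel m d).
Proof.
move=> _ J /set0Pn [v vJ] /=; split=> [z | x]; first exact: (skel_cycle_mf vJ).
apply: (skel_mf_relations vJ).
Qed.
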